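(* Let $c,d$ be comonoids in $(\mathbf{Poly},\mathcal{y},\triangleleft)$ and let $e$ be a comonad on $c$ in $\mathbb{C}\mathbf{at}^\sharp$, i.e. a $(c,c)$-bicomodule with bicomodule maps $e\to c$ and $e\to e\triangleleft_c e$ satisfying counit and coassociativity laws; then the carrier polynomial $e$ is itself a comonoid in $\mathbf{Poly}$ equipped with a comonoid homomorphism $e\to c$. Under these hypotheses there is an equivalence, preserving underlying carrier polynomials, between $(e,d)$-bicomodules and $(c,d)$-bicomodules equipped with the structure of a left $e$-comodule (a $(c,d)$-bicomodule map $p\to e\triangleleft_c p$ satisfying counit and coassociativity).
   Context: Polynomials $p=\sum_{I\in p(1)}\mathcal{y}^{p[I]}$ form $\mathbf{Poly}$ with composition product $\triangleleft$ and unit $\mathcal{y}$ (one position, one direction); comonoids in $(\mathbf{Poly},\mathcal{y},\triangleleft)$ are small categories and comonoid homomorphisms are cofunctors. For comonoids $c,d$, a $(c,d)$-bicomodule is a polynomial $p$ with compatible coassociative counital coactions $p\to c\triangleleft p$ and $p\to p\triangleleft d$. $\mathbb{C}\mathbf{at}^\sharp$ is the pseudo-double category with objects comonoids, vertical morphisms comonoid homomorphisms, horizontal morphisms bicomodules composed by $p\triangleleft_dq$ (equalizer of $p\triangleleft q\rightrightarrows p\triangleleft d\triangleleft q$), horizontal identity on $c$ the bicomodule $c$, and squares polynomial maps compatible with coactions. *)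

Set Implicit Arguments.

(** A polynomial [p = sum_{i : pos p} y^{dir p i}]. *)
Record Poly : Type := mkPoly { pos : Type; dir : pos -> Type }.
Arguments mkPoly : clear implicits.

(** A map of polynomials [p -> q]: forward on positions, backward on
    directions.  (Hom(p,q) = prod_i sum_j p[i]^{q[j]}.) *)
Definition Map (p q : Poly) : Type :=
  forall i : pos p, { j : pos q & dir q j -> dir p i }.

Definition idm (p : Poly) : Map p p :=
  fun i => existT (fun j => dir p j -> dir p i) i (fun a => a).

Definition comp (p q r : Poly) (g : Map q r) (f : Map p q) : Map p r :=
  fun i =>
    existT (fun k => dir r k -> dir p i)
      (projT1 (g (projT1 (f i))))
      (fun z => projT2 (f i) (projT2 (g (projT1 (f i))) z)).
Arguments comp {p q r} g f.

Definition yP : Poly := mkPoly unit (fun _ => unit).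

Definition tri (p q : Poly) : Poly :=
  mkPoly { i : pos p & dir p i -> pos q }
         (fun ig => { a : dir p (projT1 ig) & dir q (projT2 ig a) }).
Infix "◁" := tri (at level 40, left associativity).

Definition trim (p p' q q' : Poly) (f : Map p p') (g : Map q q')
  : Map (p ◁ q) (p' ◁ q') :=
  fun ih =>
    existT (fun jk : pos (p' ◁ q') => dir (p' ◁ q') jk -> dir (p ◁ q) ih)
      (existT (fun j => dir p' j -> pos q')
         (projT1 (f (projT1 ih)))
         (fun a' => projT1 (g (projT2 ih (projT2 (f (projT1 ih)) a')))))
      (fun d =>
         existT (fun a => dir q (projT2 ih a))
           (projT2 (f (projT1 ih)) (projT1 d))
           (projT2 (g (projT2 ih (projT2 (f (projT1 ih)) (projT1 d)))) (projT2 d))).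
Arguments trim {p p' q q'} f g.

Definition assoc (p q r : Poly) : Map ((p ◁ q) ◁ r) (p ◁ (q ◁ r)) :=
  fun x =>
    existT (fun jk : pos (p ◁ (q ◁ r)) => dir (p ◁ (q ◁ r)) jk -> dir ((p ◁ q) ◁ r) x)
      (existT (fun i => dir p i -> pos (q ◁ r))
         (projT1 (projT1 x))
         (fun a => existT (fun j => dir q j -> pos r)
                     (projT2 (projT1 x) a)
                     (fun b => projT2 x (existT (fun a0 => dir q (projT2 (projT1 x) a0)) a b))))
      (fun d =>
         existT (fun ab : dir (p ◁ q) (projT1 x) => dir r (projT2 x ab))
           (existT (fun a0 => dir q (projT2 (projT1 x) a0)) (projT1 d) (projT1 (projT2 d)))
           (projT2 (projT2 d))).
Arguments assoc {p q r}.

Definition lunit (p : Poly) : Map (yP ◁ p) p :=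
  fun x => existT (fun j => dir p j -> dir (yP ◁ p) x) (projT2 x tt)
             (fun a => existT (fun u => dir p (projT2 x u)) tt a).
Definition runit (p : Poly) : Map (p ◁ yP) p :=
  fun x => existT (fun j => dir p j -> dir (p ◁ yP) x) (projT1 x)
             (fun a => existT (fun _ => unit) a tt).
Arguments lunit {p}.
Arguments runit {p}.

Definition is_comonoid (c : Poly) (eps : Map c yP) (del : Map c (c ◁ c)) : Prop :=
  comp lunit (comp (trim eps (idm c)) del) = idm c
  /\ comp runit (comp (trim (idm c) eps) del) = idm c
  /\ comp assoc (comp (trim del (idm c)) del) = comp (trim (idm c) del) del.

Record Comonoid : Type := mkComonoid {
  carrier : Poly;
  eps : Map carrier yP;
  del : Map carrier (carrier ◁ carrier);
  comonoid_laws : is_comonoid eps del }.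

Definition is_cohom (C C' : Comonoid) (f : Map (carrier C) (carrier C')) : Prop :=
  comp (eps C') f = eps C /\ comp (del C') f = comp (trim f f) (del C).

Record Bicomod (C D : Comonoid) (p : Poly) : Type := mkBicomod {
  lco : Map p (carrier C ◁ p);
  rco : Map p (p ◁ carrier D);
  lco_counit : comp lunit (comp (trim (eps C) (idm p)) lco) = idm p;
  lco_coassoc : comp assoc (comp (trim (del C) (idm p)) lco)
                = comp (trim (idm (carrier C)) lco) lco;
  rco_counit : comp runit (comp (trim (idm p) (eps D)) rco) = idm p;
  rco_coassoc : comp assoc (comp (trim rco (idm (carrier D))) rco)
                = comp (trim (idm p) (del D)) rco;
  lr_compat : comp assoc (comp (trim lco (idm (carrier D))) rco)
              = comp (trim (idm (carrier C)) rco) lco }.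
Arguments lco {C D p}.
Arguments rco {C D p}.

Definition is_bimap (C D : Comonoid) (p q : Poly)
  (P : Bicomod C D p) (Q : Bicomod C D q) (f : Map p q) : Prop :=
  comp (lco Q) f = comp (trim (idm (carrier C)) f) (lco P)
  /\ comp (rco Q) f = comp (trim f (idm (carrier D))) (rco P).

Definition regBicomod (C : Comonoid) : Bicomod C C (carrier C).
Proof.
  destruct C as [c e d [H1 [H2 H3]]]; simpl.
  exact (@mkBicomod (mkComonoid (conj H1 (conj H2 H3)))
                    (mkComonoid (conj H1 (conj H2 H3))) c d d H1 H3 H2 H3 H3).
Defined.

(** Maps into the composite [e ◁_C q] (the equalizer of
    [e ◁ q ⇉ e ◁ C ◁ q]) are represented by maps into [e ◁ q] that equalize
    the parallel pair; since the equalizer inclusion is monic (and [◁]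
    preserves monos), equations between maps into such composites are stated
    after composing with the inclusions. *)

Definition equalizes (C D D' : Comonoid) (e q : Poly)
  (Be : Bicomod C D e) (Bq : Bicomod D D' q) (X : Poly) (f : Map X (e ◁ q)) : Prop :=
  comp assoc (comp (trim (rco Be) (idm q)) f) = comp (trim (idm e) (lco Bq)) f.

Record Comonad (C : Comonoid) : Type := mkComonad {
  cm : Poly;
  cm_bi : Bicomod C C cm;
  cm_eps : Map cm (carrier C);
  cm_eps_bimap : is_bimap cm_bi (regBicomod C) cm_eps;
  cm_del : Map cm (cm ◁ cm);
  cm_del_eq : equalizes cm_bi cm_bi cm_del;
  cm_del_bimap_l : comp assoc (comp (trim (lco cm_bi) (idm cm)) cm_del)
                   = comp (trim (idm (carrier C)) cm_del) (lco cm_bi);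
  cm_del_bimap_r : comp (trim (idm cm) (rco cm_bi)) cm_del
                   = comp assoc (comp (trim cm_del (idm (carrier C))) (rco cm_bi));
  (* counit laws: (ε ◁_C e) ∘ δ ≅ id, (e ◁_C ε) ∘ δ ≅ id *)
  cm_counit_l : comp (trim cm_eps (idm cm)) cm_del = lco cm_bi;
  cm_counit_r : comp (trim (idm cm) cm_eps) cm_del = rco cm_bi;
  cm_coassoc : comp assoc (comp (trim cm_del (idm cm)) cm_del)
               = comp (trim (idm cm) cm_del) cm_del }.
Arguments cm {C}.
Arguments cm_bi {C}.
Arguments cm_eps {C}.
Arguments cm_del {C}.

Definition inducedComonoid (C : Comonoid) (E : Comonad C)
  (H : is_comonoid (comp (eps C) (cm_eps E)) (cm_del E)) : Comonoid :=
  mkComonoid H.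
Arguments inducedComonoid {C E} H.

Record ECBicomod (C D : Comonoid) (E : Comonad C) (p : Poly) : Type := mkECBicomod {
  ecb : Bicomod C D p;
  mu : Map p (cm E ◁ p);
  mu_eq : equalizes (cm_bi E) ecb mu;
  mu_bimap_l : comp assoc (comp (trim (lco (cm_bi E)) (idm p)) mu)
               = comp (trim (idm (carrier C)) mu) (lco ecb);
  mu_bimap_r : comp (trim (idm (cm E)) (rco ecb)) mu
               = comp assoc (comp (trim mu (idm (carrier D))) (rco ecb));
  (* counit: (ε ◁_C p) ∘ mu ≅ id *)
  mu_counit : comp (trim (cm_eps E) (idm p)) mu = lco ecb;
  mu_coassoc : comp assoc (comp (trim (cm_del E) (idm p)) mu)
               = comp (trim (idm (cm E)) mu) mu }.
Arguments ecb {C D E p}.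
Arguments mu {C D E p}.

Definition is_ecmap (C D : Comonoid) (E : Comonad C) (p q : Poly)
  (P : ECBicomod D E p) (Q : ECBicomod D E q) (f : Map p q) : Prop :=
  is_bimap (ecb P) (ecb Q) f /\ comp (mu Q) f = comp (trim (idm (cm E)) f) (mu P).

(** Everything reduces to the structure of (Poly, y, ◁) as a monoidal
    category (composition and the associator are strictly associative and
    natural, ◁ is functorial) plus one transport principle: pushing a
    coassociative e-coaction [λ : p -> e ◁ p] forward along a map
    [ε : e -> c] that intertwines the comultiplications yields a
    coassociative c-coaction [(ε ◁ p) ∘ λ], and [λ] is then automatically
    compatible with the right c-coaction [(e ◁ ε) ∘ δ] of [e] and with the
    induced c-coactions.  Given this:
    - the comonad counit/coassociativity laws are the comonoid laws for
      [(e, ε_C ∘ ε, δ)], and [ε] is a cofunctor (Section [ComonadCarrier]);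
    - an (E,D)-bicomodule [(λ, ρ)] becomes an E-comodule over the
      (C,D)-bicomodule [((ε ◁ p) ∘ λ, ρ)]; conversely, an E-comodule [μ]
      on a (C,D)-bicomodule is itself the left E-coaction.  The two
      constructions are mutually inverse (the comodule counit law says the
      C-coaction is recovered from [μ]) and identify the morphisms. *)
From Stdlib Require Import FunctionalExtensionality ProofIrrelevance.
Set Implicit Arguments.

Lemma comp_idl (p q : Poly) (f : Map p q) : comp (idm q) f = f.
Proof.
  apply functional_extensionality_dep; intro i; unfold comp, idm; simpl.
  destruct (f i); reflexivity.
Qed.

Lemma comp_idr (p q : Poly) (f : Map p q) : comp f (idm p) = f.
Proof.
  apply functional_extensionality_dep; intro i; unfold comp, idm; simpl.
  destruct (f i); reflexivity.
Qed.

Lemma comp_assoc (p q r s : Poly) (h : Map r s) (g : Map q r) (f : Map p q) :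
  comp h (comp g f) = comp (comp h g) f.
Proof. reflexivity. Qed.

Lemma trim_id (p q : Poly) : trim (idm p) (idm q) = idm (p ◁ q).
Proof.
  apply functional_extensionality_dep; intros [i h]; unfold trim, idm; simpl.
  f_equal; apply functional_extensionality; intros [a b]; reflexivity.
Qed.

Lemma trim_comp (p p' p'' q q' q'' : Poly) (f : Map p' p'') (f' : Map p p')
  (g : Map q' q'') (g' : Map q q') :
  comp (trim f g) (trim f' g') = trim (comp f f') (comp g g').
Proof. reflexivity. Qed.

Lemma assoc_nat (p p' q q' r r' : Poly) (f : Map p p') (g : Map q q') (h : Map r r') :
  comp assoc (trim (trim f g) h) = comp (trim f (trim g h)) assoc.
Proof. reflexivity. Qed.

(** Consequences of bifunctoriality for whiskered maps, stated after a
    precomposition [k] so that they apply inside composite chains. *)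
Lemma whisker_l_comp (p q r s X : Poly) (f : Map q r) (f' : Map p q) (k : Map X (p ◁ s)) :
  comp (trim f (idm s)) (comp (trim f' (idm s)) k) = comp (trim (comp f f') (idm s)) k.
Proof.
  change (comp (trim (comp f f') (comp (idm s) (idm s))) k
          = comp (trim (comp f f') (idm s)) k).
  rewrite comp_idl; reflexivity.
Qed.

Lemma whisker_r_comp (p q r s X : Poly) (g : Map q r) (g' : Map p q) (k : Map X (s ◁ p)) :
  comp (trim (idm s) g) (comp (trim (idm s) g') k) = comp (trim (idm s) (comp g g')) k.
Proof.
  change (comp (trim (comp (idm s) (idm s)) (comp g g')) k
          = comp (trim (idm s) (comp g g')) k).
  rewrite comp_idl; reflexivity.
Qed.

Lemma whisker_lr (p p' q q' X : Poly) (f : Map p p') (g : Map q q') (k : Map X (p ◁ q)) :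
  comp (trim f (idm q')) (comp (trim (idm p) g) k) = comp (trim f g) k.
Proof.
  change (comp (trim (comp f (idm p)) (comp (idm q') g)) k = comp (trim f g) k).
  rewrite comp_idl, comp_idr; reflexivity.
Qed.

Lemma whisker_rl (p p' q q' X : Poly) (f : Map p p') (g : Map q q') (k : Map X (p ◁ q)) :
  comp (trim (idm p') g) (comp (trim f (idm q)) k) = comp (trim f g) k.
Proof.
  change (comp (trim (comp (idm p') f) (comp g (idm q))) k = comp (trim f g) k).
  rewrite comp_idl, comp_idr; reflexivity.
Qed.

Section Pushforward.
Variables (c e p : Poly) (ε : Map e c) (δ : Map e (e ◁ e)) (λ : Map p (e ◁ p)).
Hypothesis coassoc_λ : comp assoc (comp (trim δ (idm p)) λ) = comp (trim (idm e) λ) λ.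

Lemma pushforward_coassoc (δc : Map c (c ◁ c))
  (intertwine : comp δc ε = comp (trim ε ε) δ) :
  comp assoc (comp (trim δc (idm p)) (comp (trim ε (idm p)) λ))
  = comp (trim (idm c) (comp (trim ε (idm p)) λ)) (comp (trim ε (idm p)) λ).
Proof.
  rewrite whisker_l_comp, intertwine, <- (whisker_l_comp (trim ε ε) δ λ).
  rewrite comp_assoc, assoc_nat, <- comp_assoc, coassoc_λ.
  rewrite whisker_rl, comp_assoc, trim_comp, comp_idr; reflexivity.
Qed.

(** [λ] factors through [e ◁_c p], [e] being a right c-comodule via
    [(e ◁ ε) ∘ δ]. *)
Lemma coaction_equalizes :
  comp assoc (comp (trim (comp (trim (idm e) ε) δ) (idm p)) λ)
  = comp (trim (idm e) (comp (trim ε (idm p)) λ)) λ.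
Proof.
  rewrite <- (whisker_l_comp (trim (idm e) ε) δ λ).
  rewrite comp_assoc, assoc_nat, <- comp_assoc, coassoc_λ, whisker_r_comp.
  reflexivity.
Qed.

(** [λ] is a map of left c-comodules, [e] being one via [(ε ◁ e) ∘ δ] and
    [p] via the pushed-forward coaction. *)
Lemma coaction_left_linear :
  comp assoc (comp (trim (comp (trim ε (idm e)) δ) (idm p)) λ)
  = comp (trim (idm c) λ) (comp (trim ε (idm p)) λ).
Proof.
  rewrite <- (whisker_l_comp (trim ε (idm e)) δ λ).
  rewrite comp_assoc, assoc_nat, <- comp_assoc, coassoc_λ.
  rewrite trim_id, whisker_lr, whisker_rl; reflexivity.
Qed.
End Pushforward.

Lemma pushforward_compat (c e p d : Poly) (ε : Map e c) (λ : Map p (e ◁ p))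
  (ρ : Map p (p ◁ d))
  (compat : comp assoc (comp (trim λ (idm d)) ρ) = comp (trim (idm e) ρ) λ) :
  comp assoc (comp (trim (comp (trim ε (idm p)) λ) (idm d)) ρ)
  = comp (trim (idm c) ρ) (comp (trim ε (idm p)) λ).
Proof.
  rewrite <- (whisker_l_comp (trim ε (idm p)) λ ρ).
  rewrite comp_assoc, assoc_nat, trim_id, <- comp_assoc, compat.
  rewrite whisker_rl, comp_assoc, trim_comp, comp_idr, comp_idl; reflexivity.
Qed.

Lemma counit_along (c e p : Poly) (εc : Map c yP) (ε : Map e c) (λ : Map p (e ◁ p)) :
  comp lunit (comp (trim εc (idm p)) (comp (trim ε (idm p)) λ))
  = comp lunit (comp (trim (comp εc ε) (idm p)) λ).
Proof. rewrite whisker_l_comp; reflexivity. Qed.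

Lemma counit_through (c e p : Poly) (εc : Map c yP) (ε : Map e c) (μ : Map p (e ◁ p))
  (l : Map p (c ◁ p)) (pushforward_μ : comp (trim ε (idm p)) μ = l)
  (counit_l : comp lunit (comp (trim εc (idm p)) l) = idm p) :
  comp lunit (comp (trim (comp εc ε) (idm p)) μ) = idm p.
Proof. rewrite <- counit_along, pushforward_μ; exact counit_l. Qed.

Lemma pushforward_map (c e p q : Poly) (ε : Map e c) (λp : Map p (e ◁ p))
  (λq : Map q (e ◁ q)) (f : Map p q)
  (Hf : comp λq f = comp (trim (idm e) f) λp) :
  comp (comp (trim ε (idm q)) λq) f = comp (trim (idm c) f) (comp (trim ε (idm p)) λp).
Proof.
  change (comp (trim ε (idm q)) (comp λq f)
          = comp (trim (idm c) f) (comp (trim ε (idm p)) λp)).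
  rewrite Hf, whisker_lr, whisker_rl; reflexivity.
Qed.

Lemma regBicomod_lco (C : Comonoid) : lco (regBicomod C) = del C.
Proof. destruct C as [c ε δ [? [? ?]]]; reflexivity. Qed.

Section ComonadCarrier.
Variables (C : Comonoid) (E : Comonad C).

(** The comonad counit [ε : e -> C] intertwines [δ] with [del C]: this is
    its left-linearity combined with the counit law [(ε ◁ e) ∘ δ = λ_e]. *)
Lemma comonad_counit_cohom :
  comp (del C) (cm_eps E) = comp (trim (cm_eps E) (cm_eps E)) (cm_del E).
Proof.
  destruct (cm_eps_bimap E) as [left_linear _].
  rewrite regBicomod_lco in left_linear.
  rewrite left_linear, <- (cm_counit_l E), whisker_rl; reflexivity.
Qed.

(** [(e, ε_C ∘ ε, δ)] is a comonoid: its counit laws are those of the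
    comonad composed with the counit laws of the bicomodule [e]. *)
Lemma comonad_carrier_comonoid :
  is_comonoid (comp (eps C) (cm_eps E)) (cm_del E).
Proof.
  split; [|split].
  - rewrite <- (whisker_l_comp (eps C) (cm_eps E) (cm_del E)), (cm_counit_l E).
    exact (lco_counit (cm_bi E)).
  - rewrite <- (whisker_r_comp (eps C) (cm_eps E) (cm_del E)), (cm_counit_r E).
    exact (rco_counit (cm_bi E)).
  - exact (cm_coassoc E).
Qed.
End ComonadCarrier.

Lemma bicomod_eq (C D : Comonoid) (p : Poly) (x y : Bicomod C D p) :
  lco x = lco y -> rco x = rco y -> x = y.
Proof. destruct x, y; simpl; intros; subst; f_equal; apply proof_irrelevance. Qed.

Lemma ecbicomod_eq (C D : Comonoid) (E : Comonad C) (p : Poly) (x y : ECBicomod D E p) :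
  ecb x = ecb y -> mu x = mu y -> x = y.
Proof. destruct x, y; simpl; intros; subst; f_equal; apply proof_irrelevance. Qed.

Section Correspondence.
Variables (C D : Comonoid) (E : Comonad C)
  (H : is_comonoid (comp (eps C) (cm_eps E)) (cm_del E)).

Definition restrictBicomod (p : Poly) (x : Bicomod (inducedComonoid H) D p) :
  Bicomod C D p :=
  @mkBicomod C D p (comp (trim (cm_eps E) (idm p)) (lco x)) (rco x)
    (eq_trans (counit_along (eps C) (cm_eps E) (lco x)) (lco_counit x))
    (pushforward_coassoc (lco_coassoc x) (comonad_counit_cohom E))
    (rco_counit x) (rco_coassoc x)
    (pushforward_compat (cm_eps E) (lr_compat x)).

Definition toEC (p : Poly) (x : Bicomod (inducedComonoid H) D p) : ECBicomod D E p.
Proof.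
  refine (@mkECBicomod C D E p (restrictBicomod x) (lco x) _ _ _ eq_refl
            (lco_coassoc x)).
  - unfold equalizes; rewrite <- (cm_counit_r E).
    exact (coaction_equalizes (cm_eps E) (lco_coassoc x)).
  - rewrite <- (cm_counit_l E).
    exact (coaction_left_linear (cm_eps E) (lco_coassoc x)).
  - symmetry; exact (lr_compat x).
Defined.

(** Conversely, an E-comodule structure [μ] is a left E-coaction, counital
    because [(ε ◁ p) ∘ μ] is the counital C-coaction. *)
Definition ofEC (p : Poly) (y : ECBicomod D E p) : Bicomod (inducedComonoid H) D p :=
  @mkBicomod (inducedComonoid H) D p (mu y) (rco (ecb y))
    (counit_through (mu_counit y) (lco_counit (ecb y)))
    (mu_coassoc y) (rco_counit (ecb y)) (rco_coassoc (ecb y))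
    (eq_sym (mu_bimap_r y)).

Lemma ofEC_toEC (p : Poly) (x : Bicomod (inducedComonoid H) D p) : ofEC (toEC x) = x.
Proof. apply bicomod_eq; reflexivity. Qed.

(** Round trip on E-comodules: the C-coaction is recovered as [(ε ◁ p) ∘ μ]
    by the comodule counit law. *)
Lemma toEC_ofEC (p : Poly) (y : ECBicomod D E p) : toEC (ofEC y) = y.
Proof.
  apply ecbicomod_eq; [apply bicomod_eq|]; try reflexivity.
  exact (mu_counit y).
Qed.

Lemma bimap_iff_ecmap (p q : Poly) (x : Bicomod (inducedComonoid H) D p)
  (y : Bicomod (inducedComonoid H) D q) (f : Map p q) :
  is_bimap x y f <-> is_ecmap (toEC x) (toEC y) f.
Proof.
  unfold is_ecmap, is_bimap; simpl; split.
  - intros [left_map right_map].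
    split; [split|]; [exact (pushforward_map (cm_eps E) left_map) | exact right_map
                     | exact left_map].
  - intros [[_ right_map] left_map]; split; assumption.
Qed.
End Correspondence.

Theorem mainTheorem6 (C D : Comonoid) (E : Comonad C) :
  exists H : is_comonoid (comp (eps C) (cm_eps E)) (cm_del E),
    is_cohom (inducedComonoid H) C (cm_eps E) /\
    exists (F : forall p : Poly, Bicomod (inducedComonoid H) D p -> ECBicomod D E p)
           (G : forall p : Poly, ECBicomod D E p -> Bicomod (inducedComonoid H) D p),
      (forall p (x : Bicomod (inducedComonoid H) D p), G p (F p x) = x) /\
      (forall p (y : ECBicomod D E p), F p (G p y) = y) /\
      (forall p q (x : Bicomod (inducedComonoid H) D p)
              (y : Bicomod (inducedComonoid H) D q) (f : Map p q),
          is_bimap x y f <-> is_ecmap (F p x) (F q y) f).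
Proof.
  exists (comonad_carrier_comonoid E).
  split.
  - split; [reflexivity | exact (comonad_counit_cohom E)].
  - exists (@toEC C D E (comonad_carrier_comonoid E)),
           (@ofEC C D E (comonad_carrier_comonoid E)).
    split; [|split].
    + intros p x; apply ofEC_toEC.
    + intros p y; apply toEC_ofEC.
    + intros p q x y f; apply bimap_iff_ecmap.
Qed.
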